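(* Let $p\in(\frac12,1]$ and let $\theta=\frac{1+\sqrt{2p-1}}{2}$. There exists $\varepsilon_0=\varepsilon_0(p)>0$ such that the following holds for every fixed $0<\varepsilon<\varepsilon_0$. Let $q=q(n)\gg\frac{\log n}{n}$, and let $G=G_n$ be $n$-vertex graphs satisfying \[\left|e(G[U])-q\frac{|U|^2}{2}\right|\leq\frac{\varepsilon^2}{4}qn^2\quad\text{for all }U\subseteq V(G).\] Consider a fixed tripartition $V(G)=V_1\sqcup V_2\sqcup V_3$. Then for every $\mu\in\mathcal{M}_{1,p}(G)$, the following hold with probability $1-o(1)$ as $n\to\infty$: (P1) $e(\mathbf{G}_\mu[V_i])\geq pq\frac{|V_i|^2}{2}-\varepsilon qn^2$ for every $i\in[3]$; (P2) $e(\mathbf{G}_\mu[V_i,V_j])\geq pq|V_i||V_j|-\varepsilon qn^2$ for all $1\leq i<j\leq3$; (P3) for every $i\in[3]$ with $|V_i|\geq\varepsilon^{1/4}n$, $\mathbf{G}_\mu[V_i]$ contains a unique largest connected component $C_i$, of order at least $(\theta-\varepsilon^{1/4})|V_i|$; (P4) for all $1\leq i<j\leq3$ with $|V_i|,|V_j|\geq\varepsilon^{1/4}n$, there exists a path from $C_i$ to $C_j$ in $\mathbf{G}_\mu[V_i,V_j]$; (P5) there is a unique largest connected component $C$ in $\mathbf{G}_\mu$ such that $|C|\geq(\theta-3\varepsilon^{1/4})n$ and $C_i\subseteq C$ for each $i\in[3]$ with $|V_i|\geq\varepsilon^{1/4}n$.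
   Context: $G[U]$ is the induced subgraph on $U$, and for disjoint $X,Y$, $G[X,Y]$ is the bipartite subgraph with vertex set $X\cup Y$ and the edges of $G$ between $X$ and $Y$. A random graph model on $G$ is a probability measure $\mu$ on subsets of $E(G)$, and $\mathbf{G}_\mu$ is the random spanning subgraph with edge set distributed according to $\mu$. $\mu$ is $1$-independent if for all sets $A,B\subseteq E(G)$ whose edges span disjoint vertex sets, $E(\mathbf{G}_\mu)\cap A$ and $E(\mathbf{G}_\mu)\cap B$ are independent. $\mathcal{M}_{1,p}(G)$ is the set of $1$-independent measures on $G$ in which each edge is present with probability exactly $p$. *)

From HB Require Import structures.
From mathcomp Require Import all_boot all_order all_algebra.
From mathcomp Require Import all_classical all_reals all_analysis.
Set Implicit Arguments. Unset Strict Implicit. Unset Printing Implicit Defensive.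
Import Order.TTheory GRing.Theory Num.Theory.
Local Open Scope ring_scope.

(* Graphs on the vertex set 'I_n: an edge is a 2-element subset of 'I_n,
   a graph is a set of edges. *)
Definition edge_set (n : nat) := {set {set 'I_n}}.

Definition is_simple_graph n (G : edge_set n) : Prop :=
  forall e, e \in G -> #|e| = 2%N.

Definition e_ind n (G : edge_set n) (U : {set 'I_n}) : nat :=
  #|[set e in G | e \subset U]|.

Definition e_bip n (G : edge_set n) (X Y : {set 'I_n}) : nat :=
  #|[set e in G | [exists x in X, exists y in Y, e == [set x; y]]]|.

Definition adj_ind n (G : edge_set n) (U : {set 'I_n}) : rel 'I_n :=
  fun x y => [&& x \in U, y \in U, x != y & [set x; y] \in G].
Definition adj_bip n (G : edge_set n) (X Y : {set 'I_n}) : rel 'I_n :=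
  fun x y => [&& (x \in X) && (y \in Y) || (x \in Y) && (y \in X),
                 x != y & [set x; y] \in G].

(* C is a connected component of the graph with vertex set U and
   adjacency relation r (r only relates vertices of U). *)
Definition is_component n (U : {set 'I_n}) (r : rel 'I_n) (C : {set 'I_n}) : Prop :=
  exists2 x, x \in U & C = [set y | connect r x y].

Definition unique_largest_component n (U : {set 'I_n}) (r : rel 'I_n)
    (C : {set 'I_n}) : Prop :=
  is_component U r C /\
  forall C', is_component U r C' -> C' <> C -> (#|C'| < #|C|)%N.

(* Random graph models on G: probability mass functions on subsets of E(G). *)
Definition vspan n (A : edge_set n) : {set 'I_n} := \bigcup_(e in A) e.

Definition Prob {R : realType} n (mu : {ffun edge_set n -> R})
    (P : edge_set n -> Prop) : R :=
  \sum_(S : edge_set n | `[< P S >]) mu S.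

Definition is_random_graph_model {R : realType} n (G : edge_set n)
    (mu : {ffun edge_set n -> R}) : Prop :=
  (forall S, 0 <= mu S) /\ (\sum_(S : edge_set n) mu S = 1) /\
  (forall S, mu S != 0 -> S \subset G).

Definition one_independent {R : realType} n (G : edge_set n)
    (mu : {ffun edge_set n -> R}) : Prop :=
  forall A B : edge_set n, A \subset G -> B \subset G ->
    [disjoint vspan A & vspan B] ->
    forall A' B' : edge_set n,
      Prob mu (fun S => S :&: A = A' /\ S :&: B = B') =
      Prob mu (fun S => S :&: A = A') * Prob mu (fun S => S :&: B = B').

Definition M1p {R : realType} n (p : R) (G : edge_set n)
    (mu : {ffun edge_set n -> R}) : Prop :=
  is_random_graph_model G mu /\ one_independent G mu /\
  (forall e, e \in G -> Prob mu (fun S => e \in S) = p).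

Definition Vpart n (part : 'I_n -> 'I_3) (i : 'I_3) : {set 'I_n} :=
  [set v | part v == i].

Definition good_event {R : realType} n (p q eps : R) (part : 'I_n -> 'I_3)
    (S : edge_set n) : Prop :=
  let theta := (1 + Num.sqrt (2 * p - 1)) / 2 in
  let d := eps `^ (4^-1) in
  let V := Vpart part in
  let big := fun i : 'I_3 => d * n%:R <= #|V i|%:R in
  (forall i : 'I_3,
     p * q * (#|V i|%:R ^+ 2 / 2) - eps * q * n%:R ^+ 2 <= (e_ind S (V i))%:R) /\
  (forall i j : 'I_3, (i < j)%N ->
     p * q * (#|V i|%:R * #|V j|%:R) - eps * q * n%:R ^+ 2
       <= (e_bip S (V i) (V j))%:R) /\
  exists Cs : 'I_3 -> {set 'I_n},
    (forall i : 'I_3, big i ->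
       unique_largest_component (V i) (adj_ind S (V i)) (Cs i) /\
       (theta - d) * #|V i|%:R <= #|Cs i|%:R) /\
    (forall i j : 'I_3, (i < j)%N -> big i -> big j ->
       exists x, exists y, [/\ x \in Cs i, y \in Cs j &
                               connect (adj_bip S (V i) (V j)) x y]) /\
    (exists C : {set 'I_n},
       [/\ unique_largest_component [set: 'I_n] (adj_ind S [set: 'I_n]) C,
           (theta - 3 * d) * n%:R <= #|C|%:R &
           forall i : 'I_3, big i -> Cs i \subset C]).

From HB Require Import structures.
From mathcomp Require Import all_boot all_order all_algebra.
From mathcomp Require Import all_classical all_reals all_analysis.
From mathcomp Require Import ring lra zify.
Import Order.TTheory GRing.Theory Num.Theory numFieldTopology.Exports numFieldNormedType.Exports.
Set Implicit Arguments. Unset Strict Implicit. Unset Printing Implicit Defensive.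

(* Write s = sqrt (2p - 1), theta = (1 + s) / 2, so that p = theta^2 + (1 - theta)^2, and
   d = eps^(1/4) < s / 4.  Everything follows deterministically from the event that, for
   every union V_T of parts and every pair (V_T1, V_T2), the random graph keeps at least a
   p-fraction of the edges of G inside V_T (resp. between V_T1 and V_T2), up to eps^2 q n^2.
   On that event, a set W of at least d n vertices has a component of order
   (theta - d)|W|: otherwise W splits, with no edge across, into at most three parts whose
   squared orders sum to at most ((theta - d)^2 + (1 - theta + d)^2)|W|^2, and the
   discrepancy hypothesis leaves too few edges of G inside the parts.  The same count
   forbids a cut of G_mu[A, B] keeping at least half of A and at most half of B, which
   joins the giant components of two parts, and puts each of them inside the global giant.
   Each edge count is a sum of 1-independent indicators in which only edges sharing a vertex
   are correlated; there are at most 2 n |G| <= 2 q n^3 such pairs, so Chebyshev bounds each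
   failure probability by O(1 / (eps^4 q n)), which tends to 0 because q >> log n / n. *)

Lemma cardsU_disjoint {T : finType} {A B : {set T}} :
  [disjoint A & B] -> #|A :|: B| = (#|A| + #|B|)%N.
Proof. by move=> dAB; apply/eqP; rewrite (leq_card_setU A B).2. Qed.

Section Graphs.
Variable n : nat.
Implicit Types (S G : edge_set n) (A B W X Y : {set 'I_n}).

Lemma simple_edgeP {G e} : is_simple_graph G -> e \in G ->
  exists x y, x != y /\ e = [set x; y].
Proof. by move=> sG /sG /eqP/cards2P. Qed.

Lemma simple_subgraph S G : S \subset G -> is_simple_graph G -> is_simple_graph S.
Proof. by move=> SG sG e eS; apply/sG/(fintype.subsetP SG). Qed.

Lemma e_ind_subgraph S G W : S \subset G -> (e_ind S W <= e_ind G W)%N.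
Proof.
move=> SG; apply/subset_leq_card/fintype.subsetP => e; rewrite !inE => /andP[eS ->].
by rewrite (fintype.subsetP SG).
Qed.

Lemma e_bip_subgraph S G A B : S \subset G -> (e_bip S A B <= e_bip G A B)%N.
Proof.
move=> SG; apply/subset_leq_card/fintype.subsetP => e; rewrite !inE => /andP[eS ->].
by rewrite (fintype.subsetP SG).
Qed.

Lemma e_ind_setU G A B : is_simple_graph G -> [disjoint A & B] ->
  e_ind G (A :|: B) = (e_ind G A + e_ind G B + e_bip G A B)%N.
Proof.
move=> sG dAB; rewrite /e_ind /e_bip.
set EA := [set e in G | e \subset A]; set EB := [set e in G | e \subset B].
set EAB := [set e in G | [exists x in A, exists y in B, e == [set x; y]]].
have notAB x : x \in A -> x \in B -> False.
  by move=> xA; move: dAB => /disjointFr/(_ xA) ->.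
have dEAB : [disjoint EA & EB].
  rewrite -setI_eq0; apply/eqP/setP => e; rewrite !inE.
  apply/negP => /andP[/andP[eG eA] /andP[_ eB]].
  have [x [y [_ exy]]] := simple_edgeP sG eG.
  have xe : x \in e by rewrite exy !inE eqxx.
  exact: notAB (fintype.subsetP eA x xe) (fintype.subsetP eB x xe).
have dEABAB : [disjoint EA :|: EB & EAB].
  rewrite -setI_eq0; apply/eqP/setP => e; rewrite !inE.
  apply/negP => /andP[/orP[]/andP[_ eAB] /andP[_ /existsP[x /andP[xA /existsP[y]]]]];
    case/andP=> yB /eqP exy.
  + by apply: (notAB y) => //; apply: (fintype.subsetP eAB); rewrite exy !inE eqxx orbT.
  + by apply: (notAB x) => //; apply: (fintype.subsetP eAB); rewrite exy !inE eqxx.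
rewrite -(cardsU_disjoint dEAB) -(cardsU_disjoint dEABAB); apply: eq_card => e; rewrite !inE.
case eG: (e \in G) => //=.
have [x [y [_ ->]]] := simple_edgeP sG eG.
rewrite !finset.subUset !finset.sub1set !inE.
apply/idP/idP.
- case/andP => /orP[xA|xB] /orP[yA|yB]; rewrite ?xA ?yA ?xB ?yB ?orbT //=.
  + apply/orP; right; apply/existsP; exists x; rewrite xA; apply/existsP; exists y.
    by rewrite yB eqxx.
  + apply/orP; right; apply/existsP; exists y; rewrite yA; apply/existsP; exists x.
    by rewrite xB finset.setUC eqxx.
- case/orP => [/orP[]/andP[-> ->]|]; rewrite ?orbT //.
  case/existsP => u /andP[uA /existsP[v /andP[vB /eqP E]]].
  have : x \in [set x; y] by rewrite !inE eqxx.
  have : y \in [set x; y] by rewrite !inE eqxx orbT.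
  by rewrite E !inE => /orP[]/eqP-> /orP[]/eqP->; rewrite ?uA ?vB ?orbT.
Qed.

Definition edge_closed S W X :=
  forall u v, u \in X -> v \in W -> v \notin X -> [set u; v] \notin S.

Lemma edge_closedT S W : edge_closed S W W.
Proof. by move=> u v _ ->. Qed.

Lemma edge_closedS S W W' X : W' \subset W -> edge_closed S W X -> edge_closed S W' X.
Proof. by move=> sW clX u v uX vW'; apply/clX/(fintype.subsetP sW). Qed.

Lemma edge_closedU S W X Y : edge_closed S W X -> edge_closed S W Y -> edge_closed S W (X :|: Y).
Proof.
move=> sX sY u v; rewrite !inE negb_or => /orP[uX|uY] vW /andP[vX vY]; [exact: sX | exact: sY].
Qed.

Lemma e_ind_edge_closed S W X : is_simple_graph S -> X \subset W -> edge_closed S W X ->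
  e_ind S W = (e_ind S X + e_ind S (W :\: X))%N.
Proof.
move=> sS XW clX.
have dX : [disjoint X & W :\: X].
  by rewrite disjoint_sym; apply/finset.setDidPl; rewrite finset.setDDl finset.setUid.
have no_cross : e_bip S X (W :\: X) = 0%N.
  apply/eqP; rewrite cards_eq0; apply/eqP/setP => e; rewrite !inE.
  apply/negP => /andP[eS /existsP[u /andP[uX /existsP[v]]]].
  rewrite !inE => /andP[/andP[vX vW] /eqP euv].
  by move: (clX u v uX vW vX); rewrite -euv eS.
by rewrite -[in LHS](finset.setID W X) (finset.setIidPr XW) e_ind_setU // no_cross addn0.
Qed.

Definition component S W x := [set y | connect (adj_ind S W) x y].

Lemma adj_ind_sym S W : symmetric (adj_ind S W).
Proof. by move=> x y; rewrite /adj_ind finset.setUC eq_sym; case: (x \in W); case: (y \in W). Qed.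

Lemma adj_bip_sym S A B : symmetric (adj_bip S A B).
Proof.
move=> x y; rewrite /adj_bip finset.setUC eq_sym.
by case: (x \in A); case: (y \in A); case: (x \in B); case: (y \in B); rewrite ?orbF.
Qed.

Lemma edge_closed_adj {S W X} : edge_closed S W X -> fingraph.closed (adj_ind S W) X.
Proof.
move=> clX u v /and4P[uW vW _ uvS].
case uX: (u \in X); case vX: (v \in X) => //.
- by move: (clX u v uX vW (negbT vX)); rewrite uvS.
- by move: (clX v u vX uW (negbT uX)); rewrite finset.setUC uvS.
Qed.

Lemma mem_component S W x : x \in component S W x.
Proof. by rewrite inE connect0. Qed.

Lemma component_sub_edge_closed {S W X x} :
  edge_closed S W X -> x \in X -> component S W x \subset X.
Proof.
move=> clX xX; apply/fintype.subsetP => y; rewrite inE => /(closed_connect (edge_closed_adj clX)).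
by rewrite xX.
Qed.

Lemma component_subset {S W x} : x \in W -> component S W x \subset W.
Proof. exact/component_sub_edge_closed/edge_closedT. Qed.

Lemma edge_closed_component S W x : x \in W -> edge_closed S W (component S W x).
Proof.
move=> xW u v ux vW; apply: contra => uvS.
have xu : connect (adj_ind S W) x u by move: ux; rewrite inE.
rewrite inE; have [<-|uv] := eqVneq u v; first exact: xu.
apply: connect_trans xu (connect1 _).
by rewrite /adj_ind (fintype.subsetP (component_subset xW) u ux) vW uv uvS.
Qed.

Lemma eq_component {S W x y z} : z \in component S W x -> z \in component S W y ->
  component S W x = component S W y.
Proof.
rewrite !inE => cxz cyz; have sym := sym_connect_sym (adj_ind_sym S W).
have cxy : connect (adj_ind S W) x y by apply: connect_trans cxz _; rewrite sym.
by apply/setP => w; rewrite !inE (same_connect sym cxy).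
Qed.

Lemma disjoint_components S W x y : component S W x != component S W y ->
  [disjoint component S W x & component S W y].
Proof.
move=> neq; rewrite -setI_eq0; apply/negPn/set0Pn => -[z].
by rewrite finset.in_setI => /andP[zx zy]; rewrite (eq_component zx zy) eqxx in neq.
Qed.

Lemma component_subW S A W x : A \subset W -> component S A x \subset component S W x.
Proof.
move=> AW; apply/fintype.subsetP => y; rewrite !inE; apply: connect_sub => u v.
case/and4P=> uA vA uv uvS; apply: connect1.
by rewrite /adj_ind (fintype.subsetP AW u uA) (fintype.subsetP AW v vA) uv uvS.
Qed.

Lemma large_component_unique S W x : x \in W -> (#|W| < 2 * #|component S W x|)%N ->
  unique_largest_component W (adj_ind S W) (component S W x).
Proof.
move=> xW big; split; first by exists x.
move=> _ [y yW ->]; rewrite -/(component S W y) => neq.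
have dyx := disjoint_components (introN eqP neq).
have : (#|component S W y :|: component S W x| <= #|W|)%N.
  by apply: subset_leq_card; rewrite finset.subUset !component_subset.
rewrite cardsU_disjoint // => cover.
by rewrite -(ltn_add2r #|component S W x|) addnn -mul2n (leq_ltn_trans cover big).
Qed.

(* Grow [X] to a largest edge-closed set below half of [W]; the component of any
   vertex outside [X] then pushes it over half. *)
Lemma edge_closed_halving S W : (0 < #|W|)%N ->
  (forall x, x \in W -> (2 * #|component S W x| < #|W|)%N) ->
  exists X Y, [/\ X \subset W, Y \subset W, edge_closed S W X & edge_closed S W Y] /\
    [/\ (2 * #|X| < #|W|)%N, (2 * #|Y| < #|W|)%N & (#|W| <= 2 * #|X :|: Y|)%N].
Proof.
move=> W0 small.
pose P X := [&& X \subset W, `[< edge_closed S W X >] & (2 * #|X| < #|W|)%N].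
have P0 : P finset.set0.
  by rewrite /P finset.sub0set cards0 muln0 W0 andbT; apply/asboolP => u v; rewrite inE.
case: (arg_maxnP (fun X => #|X|) P0) => X /and3P[XW /asboolP clX halfX] maxX.
have [x xW xX] : exists2 x, x \in W & x \notin X.
  apply/fintype.subsetPn; apply: contraTN halfX => WX.
  by rewrite -leqNgt (leq_trans (subset_leq_card WX)) // mul2n -addnn leq_addr.
exists X, (component S W x); split; split => //;
  [exact: component_subset | exact: edge_closed_component | exact: small|].
rewrite leqNgt; apply/negP => halfXC.
have : P (X :|: component S W x).
  rewrite /P finset.subUset XW component_subset // halfXC /= andbT.
  by apply/asboolP; apply: edge_closedU => //; apply: edge_closed_component.
move/maxX; apply/negP; rewrite -ltnNge; apply: proper_card.
apply/properP; split; first exact: finset.subsetUl.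
by exists x; rewrite ?finset.in_setU ?mem_component ?orbT.
Qed.

Lemma e_bip_split S A B X : fingraph.closed (adj_bip S A B) X ->
  (e_bip S A B <= e_bip S (A :&: X) (B :&: X) + e_bip S (A :\: X) (B :\: X))%N.
Proof.
move=> clX; rewrite /e_bip; apply: leq_trans (leq_card_setU _ _); apply: subset_leq_card.
apply/fintype.subsetP => e; rewrite !inE => /andP[eS /existsP[u /andP[uA /existsP[v]]]].
case/andP=> vB /eqP euv; rewrite eS /=.
have uvX : (u \in X) = (v \in X).
  have [<-|uv] := eqVneq u v; first by [].
  by apply: clX; rewrite /adj_bip uA vB uv -euv eS.
case uX: (u \in X); [apply/orP; left | apply/orP; right];
  apply/existsP; exists u; rewrite !inE uA uX /=;
  by apply/existsP; exists v; rewrite !inE vB -uvX uX euv eqxx.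
Qed.
End Graphs.

Definition Vparts n k (part : 'I_n -> 'I_k) (T : {set 'I_k}) : {set 'I_n} :=
  [set v | part v \in T].

Section Parts.
Variables (n k : nat) (part : 'I_n -> 'I_k).

Lemma Vparts_setT : Vparts part [set: 'I_k] = [set: 'I_n].
Proof. by apply/setP => v; rewrite !inE. Qed.

Lemma Vparts_setC (T : {set 'I_k}) : Vparts part (~: T) = ~: Vparts part T.
Proof. by apply/setP => v; rewrite !inE. Qed.

Lemma Vparts_disjoint (T1 T2 : {set 'I_k}) :
  [disjoint T1 & T2] -> [disjoint Vparts part T1 & Vparts part T2].
Proof.
move=> dT; rewrite -setI_eq0; apply/eqP/setP => v; rewrite !inE.
by apply/negbTE/negP => /andP[vT1]; move: dT => /disjointFr/(_ vT1) ->.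
Qed.

End Parts.

Lemma Vpart_Vparts n (part : 'I_n -> 'I_3) i : Vpart part i = Vparts part [set i].
Proof. by apply/setP => v; rewrite !inE. Qed.

Local Open Scope ring_scope.

Section Deterministic.
Variables (R : realType) (n : nat) (G S : edge_set n) (p q eps s d : R).
Implicit Types (A B U W X Y : {set 'I_n}).

Hypothesis q_gt0 : 0 < q.
Hypothesis n_gt0 : (0 < n)%N.
Hypothesis d_gt0 : 0 < d.
Hypothesis d_le_s : 4 * d <= s.
Hypothesis s_le1 : s <= 1.
Hypothesis p_def : p = (1 + s ^+ 2) / 2.
Hypothesis eps_def : eps = d ^+ 4.

Let theta := (1 + s) / 2.
Let err := eps ^+ 2 * q * n%:R ^+ 2.

Lemma p_ge0 : 0 <= p.
Proof. by rewrite p_def; apply: divr_ge0 => //; apply: addr_ge0 => //; apply: sqr_ge0. Qed.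

Lemma p_le1 : p <= 1.
Proof.
have s0 : 0 <= s by move: d_gt0 d_le_s; lra.
have : s ^+ 2 <= 1 by move: s_le1; rewrite expr2; nra.
by rewrite p_def; lra.
Qed.

Lemma eps_gt0 : 0 < eps.
Proof. by rewrite eps_def exprn_gt0. Qed.

Lemma eps_le : eps <= 1 / 4.
Proof.
have d0 := d_gt0; have d4 : d <= 1 / 4 by move: d_le_s s_le1; lra.
have d1 : d ^+ 3 <= 1 by apply: exprn_ile1; lra.
rewrite eps_def exprS; nra.
Qed.

Lemma qn2_gt0 : 0 < q * n%:R ^+ 2.
Proof. by rewrite mulr_gt0 // exprn_gt0 // ltr0n. Qed.

Lemma err_le : err <= eps / 4 * (q * n%:R ^+ 2).
Proof.
rewrite /err -mulrA ler_wpM2r ?(ltW qn2_gt0) //.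
have := eps_le; have := eps_gt0; nra.
Qed.

Lemma err_ge0 : 0 <= err.
Proof. by rewrite /err -mulrA mulr_ge0 ?sqr_ge0 ?(ltW qn2_gt0). Qed.

Lemma sqr_dn_le {w} : d * n%:R <= w -> eps * n%:R ^+ 2 <= d ^+ 2 * w ^+ 2.
Proof.
move=> dnw; have dn0 : 0 <= d * n%:R by rewrite mulr_ge0 // ltW.
rewrite eps_def (_ : d ^+ 4 * n%:R ^+ 2 = d ^+ 2 * (d * n%:R) ^+ 2); last by ring.
by rewrite ler_wpM2l ?sqr_ge0 // ler_sqr // ?nnegrE // (le_trans dn0).
Qed.

(* [p - 2 d (s - d) = (theta - d) ^+ 2 + (1 - theta + d) ^+ 2]. *)
Lemma sum_sq_gap w Q : d * n%:R <= w -> Q <= (p - 2 * d * (s - d)) * w ^+ 2 ->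
  q * Q / 2 + 3 / 4 * err < p * (q * (w ^+ 2 / 2) - err / 4) - err.
Proof.
move=> dnw hQ.
have gap : 6 * (eps * n%:R ^+ 2) <= p * w ^+ 2 - Q.
  have := sqr_dn_le dnw; have : 0 <= w ^+ 2 by apply: sqr_ge0.
  have : 6 * d ^+ 2 <= 2 * d * (s - d) by move: d_gt0 d_le_s; rewrite expr2; nra.
  nra.
have qgap := ler_wpM2l (ltW q_gt0) gap.
have := err_le; have := p_le1; have := p_ge0; have := eps_le.
have : 0 < eps * (q * n%:R ^+ 2) by rewrite mulr_gt0 ?eps_gt0 ?qn2_gt0.
have := err_ge0; nra.
Qed.


Lemma split_sq_le w c : w / 2 <= c -> c <= (theta - d) * w ->
  c ^+ 2 + (w - c) ^+ 2 <= (p - 2 * d * (s - d)) * w ^+ 2.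
Proof.
move=> hc cw.
have -> : (p - 2 * d * (s - d)) * w ^+ 2 = ((theta - d) * w) ^+ 2 + (w - (theta - d) * w) ^+ 2.
  by rewrite p_def /theta; field.
have : 0 <= ((theta - d) * w - c) * ((theta - d) * w + c - w) by apply: mulr_ge0; lra.
lra.
Qed.

Lemma three_sq_le a b c : 0 <= a -> 0 <= b -> 0 <= c ->
  2 * a <= a + b + c -> 2 * b <= a + b + c -> 2 * c <= a + b + c ->
  a ^+ 2 + b ^+ 2 + c ^+ 2 <= (p - 2 * d * (s - d)) * (a + b + c) ^+ 2.
Proof.
move=> a0 b0 c0 ha hb hc.
have : (a + b + c) ^+ 2 / 2 <= (p - 2 * d * (s - d)) * (a + b + c) ^+ 2.
  have : 0 <= (s - 2 * d) ^+ 2 * (a + b + c) ^+ 2 by rewrite mulr_ge0 ?sqr_ge0.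
  rewrite p_def; lra.
have : 0 <= a * (a + b + c - 2 * a) by apply: mulr_ge0; lra.
have : 0 <= b * (a + b + c - 2 * b) by apply: mulr_ge0; lra.
have : 0 <= c * (a + b + c - 2 * c) by apply: mulr_ge0; lra.
lra.
Qed.

Lemma bip_gap a b P : d * n%:R <= a -> d * n%:R <= b -> P <= a * b / 2 ->
  q * P + 3 / 2 * err < p * (q * (a * b) - 3 / 4 * err) - err.
Proof.
move=> dna dnb hP.
have dn0 : 0 <= d * n%:R by rewrite mulr_ge0 // ltW.
have hab : (d * n%:R) * (d * n%:R) <= a * b by apply: ler_pM.
have gap : 8 * (eps * n%:R ^+ 2) <= p * (a * b) - P.
  have : 16 * d ^+ 2 <= s ^+ 2 by move: d_gt0 d_le_s; rewrite !expr2; nra.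
  have : 0 <= d ^+ 2 by apply: sqr_ge0.
  rewrite p_def eps_def; nra.
have qgap := ler_wpM2l (ltW q_gt0) gap.
have := err_le; have := p_le1; have := p_ge0; have := err_ge0.
have : 0 < eps * (q * n%:R ^+ 2) by rewrite mulr_gt0 ?eps_gt0 ?qn2_gt0.
nra.
Qed.

Lemma ind_lower e v : q * (v ^+ 2 / 2) - err / 4 <= e ->
  p * q * (v ^+ 2 / 2) - eps * q * n%:R ^+ 2 <= p * e - err.
Proof.
move=> he; have := ler_wpM2l p_ge0 he.
have := err_le; have := p_le1; have := err_ge0; have := eps_gt0; have := qn2_gt0.
nra.
Qed.

Lemma bip_lower e a b : q * (a * b) - 3 / 4 * err <= e ->
  p * q * (a * b) - eps * q * n%:R ^+ 2 <= p * e - err.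
Proof.
move=> he; have := ler_wpM2l p_ge0 he.
have := err_le; have := p_le1; have := err_ge0; have := eps_gt0; have := qn2_gt0.
nra.
Qed.


Hypothesis sG : is_simple_graph G.
Hypothesis SG : S \subset G.
Hypothesis disc : forall U,
  `|(e_ind G U)%:R - q * (#|U|%:R ^+ 2 / 2)| <= eps ^+ 2 / 4 * q * n%:R ^+ 2.

Lemma e_ind_G_bounds U :
  q * (#|U|%:R ^+ 2 / 2) - err / 4 <= (e_ind G U)%:R <= q * (#|U|%:R ^+ 2 / 2) + err / 4.
Proof.
have := disc U; rewrite ler_norml (_ : eps ^+ 2 / 4 * q * n%:R ^+ 2 = err / 4); last first.
  by rewrite /err; field.
by case/andP=> lo hi; apply/andP; split; lra.
Qed.

Lemma e_ind_S_le U : (e_ind S U)%:R <= q * (#|U|%:R ^+ 2 / 2) + err / 4.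
Proof.
have [_ hi] := andP (e_ind_G_bounds U).
by apply: le_trans hi; rewrite ler_nat e_ind_subgraph.
Qed.


Lemma e_bip_G_bounds A B : [disjoint A & B] ->
  q * (#|A|%:R * #|B|%:R) - 3 / 4 * err <= (e_bip G A B)%:R <=
  q * (#|A|%:R * #|B|%:R) + 3 / 4 * err.
Proof.
move=> dAB.
have := e_ind_G_bounds (A :|: B); have := e_ind_G_bounds A; have := e_ind_G_bounds B.
rewrite e_ind_setU // (cardsU_disjoint dAB) !natrD.
have -> : (#|A|%:R + #|B|%:R) ^+ 2 / 2 =
  #|A|%:R ^+ 2 / 2 + #|B|%:R ^+ 2 / 2 + #|A|%:R * #|B|%:R :> R by field.
move=> /andP[? ?] /andP[? ?] /andP[? ?]; apply/andP; split; lra.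
Qed.

Lemma small_components_sum_sq W : (0 < #|W|)%N ->
  (forall x, x \in W -> #|component S W x|%:R < (theta - d) * #|W|%:R) ->
  exists2 Q, (e_ind S W)%:R <= q * Q / 2 + 3 / 4 * err &
    Q <= (p - 2 * d * (s - d)) * #|W|%:R ^+ 2.
Proof.
move=> W0 small; have sS := simple_subgraph SG sG.
have [/exists_inP[x xW halfC]|/exists_inPn smallC] :=
  boolP [exists x in W, (#|W| <= 2 * #|component S W x|)%N].
- set C := component S W x.
  have CW : C \subset W := component_subset xW.
  have cW := cardsID C W; rewrite (finset.setIidPr CW) in cW.
  exists (#|C|%:R ^+ 2 + #|W :\: C|%:R ^+ 2).
    rewrite (e_ind_edge_closed sS CW (edge_closed_component xW)) natrD.
    by have := e_ind_S_le C; have := e_ind_S_le (W :\: C); have := err_ge0; lra.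
  have -> : #|W :\: C|%:R = #|W|%:R - #|C|%:R :> R by rewrite -cW natrD; ring.
  apply: split_sq_le; last exact/ltW/small.
  by move: halfC; rewrite -(ler_nat R) natrM; lra.
- have halves x : x \in W -> (2 * #|component S W x| < #|W|)%N.
    by move=> xW; rewrite ltnNge smallC.
  have [X [Y [[XW YW clX clY] [hX hY hXY]]]] := edge_closed_halving W0 halves.
  set Z := X :|: Y.
  have ZW : Z \subset W by rewrite finset.subUset XW YW.
  have XZ : X \subset Z := finset.subsetUl X Y.
  have cW := cardsID Z W; rewrite (finset.setIidPr ZW) in cW.
  have cZ := cardsID X Z; rewrite (finset.setIidPr XZ) in cZ.
  have cZX : (#|Z :\: X| <= #|Y|)%N by apply: subset_leq_card; rewrite finset.subDset.
  exists (#|X|%:R ^+ 2 + #|Z :\: X|%:R ^+ 2 + #|W :\: Z|%:R ^+ 2).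
    rewrite (e_ind_edge_closed sS ZW (edge_closedU clX clY)).
    rewrite (e_ind_edge_closed sS XZ (edge_closedS ZW clX)) !natrD.
    have := e_ind_S_le X; have := e_ind_S_le (Z :\: X); have := e_ind_S_le (W :\: Z).
    by have := err_ge0; lra.
  have -> : #|W|%:R = #|X|%:R + #|Z :\: X|%:R + #|W :\: Z|%:R :> R.
    by rewrite -cW -cZ !natrD.
  apply: three_sq_le; rewrite ?ler0n // -!natrD -natrM ler_nat cZ cW.
  + exact: ltnW.
  + by rewrite (leq_trans _ (ltnW hY)) // leq_mul2l.
  + rewrite -cW mul2n -addnn leq_add2r -(leq_add2l #|Z|) cW (leq_trans hXY) //.
    by rewrite mul2n -addnn.
Qed.

Lemma giant_comp W : d * n%:R <= #|W|%:R ->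
  p * (e_ind G W)%:R - err <= (e_ind S W)%:R ->
  exists2 x, x \in W & (theta - d) * #|W|%:R <= #|component S W x|%:R.
Proof.
move=> bigW denseW.
have W0 : (0 < #|W|)%N.
  by rewrite -(ltr0n R) (lt_le_trans _ bigW) // mulr_gt0 // ltr0n.
have [/exists_inP //|/exists_inPn small] :=
  boolP [exists x in W, (theta - d) * #|W|%:R <= #|component S W x|%:R].
have [Q eSQ /(sum_sq_gap bigW) gap] :
    exists2 Q, (e_ind S W)%:R <= q * Q / 2 + 3 / 4 * err &
      Q <= (p - 2 * d * (s - d)) * #|W|%:R ^+ 2.
  by apply: small_components_sum_sq => // x xW; rewrite real_ltNge ?small ?num_real.
have : p * (q * (#|W|%:R ^+ 2 / 2) - err / 4) - err <= (e_ind S W)%:R.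
  by apply: le_trans denseW; rewrite lerD2r ler_wpM2l ?p_ge0 //; case/andP: (e_ind_G_bounds W).
by move: gap eSQ; lra.
Qed.


Lemma double_lt_giant (w c : nat) : (0 < w)%N -> (theta - d) * w%:R <= c%:R -> (w < 2 * c)%N.
Proof.
move=> w0 hc; rewrite -(ltr_nat R) natrM.
have : 0 < w%:R :> R by rewrite ltr0n.
have : 1 / 2 < theta - d by move: d_gt0 d_le_s; rewrite /theta; lra.
nra.
Qed.

Lemma dense_bip_no_half_cut A B X : d * n%:R <= #|A|%:R -> d * n%:R <= #|B|%:R ->
  [disjoint A & B] -> p * (e_bip G A B)%:R - err <= (e_bip S A B)%:R ->
  fingraph.closed (adj_bip S A B) X ->
  (#|A| <= 2 * #|A :&: X|)%N -> (2 * #|B :&: X| <= #|B|)%N -> False.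
Proof.
move=> dnA dnB dAB denseAB clX hA hB.
have dI : [disjoint A :&: X & B :&: X] by apply: disjointW dAB; apply: finset.subsetIl.
have dD : [disjoint A :\: X & B :\: X] by apply: disjointW dAB; apply: finset.subsetDl.
have [_ upI] := andP (e_bip_G_bounds dI); have [_ upD] := andP (e_bip_G_bounds dD).
have [lo _] := andP (e_bip_G_bounds dAB).
have split : (e_bip S A B)%:R <=
    (e_bip G (A :&: X) (B :&: X))%:R + (e_bip G (A :\: X) (B :\: X))%:R :> R.
  rewrite -natrD ler_nat (leq_trans (e_bip_split clX)) // leq_add //; exact: e_bip_subgraph.
have cA := cardsID X A; have cB := cardsID X B.
have eA : #|A :\: X|%:R = #|A|%:R - #|A :&: X|%:R :> R by rewrite -cA natrD; ring.
have eB : #|B :\: X|%:R = #|B|%:R - #|B :&: X|%:R :> R by rewrite -cB natrD; ring.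
rewrite eA eB in upD.
move: hA hB; rewrite -!(ler_nat R) !natrM => hA hB.
set a := #|A|%:R in dnA lo upD hA *; set b := #|B|%:R in dnB lo upD hB *.
set xA := #|A :&: X|%:R in upI upD hA *; set xB := #|B :&: X|%:R in upI upD hB *.
have half : xA * xB + (a - xA) * (b - xB) <= a * b / 2.
  have : 0 <= (2 * xA - a) * (b - 2 * xB) by apply: mulr_ge0; lra.
  lra.
have := bip_gap dnA dnB half; have := ler_wpM2l p_ge0 lo.
lra.
Qed.


Lemma large_components_bip_connected A B x y : [disjoint A & B] ->
  d * n%:R <= #|A|%:R -> d * n%:R <= #|B|%:R ->
  p * (e_bip G A B)%:R - err <= (e_bip S A B)%:R ->
  x \in A -> y \in B ->
  (#|A| < 2 * #|component S A x|)%N -> (#|B| < 2 * #|component S B y|)%N ->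
  exists a b, [/\ a \in component S A x, b \in component S B y &
                  connect (adj_bip S A B) a b].
Proof.
move=> dAB dnA dnB denseAB xA yB bigx bigy.
set r := adj_bip S A B; set Cx := component S A x; set Cy := component S B y.
have [/exists_inP[a aC /exists_inP[b bC ab]]|/exists_inPn apart] :=
  boolP [exists a in Cx, exists b in Cy, connect r a b]; first by exists a, b.
exfalso.
have sym_r : connect_sym r := sym_connect_sym (adj_bip_sym S A B).
set X := [set v | v \in fingraph.closure r Cx].
have clX : fingraph.closed r X by move=> u v ruv; rewrite !inE; apply: fingraph.closure_closed.
apply: (dense_bip_no_half_cut dnA dnB dAB denseAB clX).
  apply: leq_trans (ltnW bigx) _; rewrite leq_mul2l subset_leq_card ?orbT //.
  rewrite finset.subsetI component_subset //=.
  by apply/fintype.subsetP => v vC; rewrite inE fingraph.mem_closure.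
have dXC : [disjoint B :&: X & Cy].
  rewrite -setI_eq0; apply/eqP/setP => v; rewrite finset.in_setI finset.in_set0.
  apply/negbTE/negP => /andP[]; rewrite finset.in_setI inE => /andP[_].
  case/pred0Pn => c /andP[vc cC] vC.
  have cv : connect r c v by rewrite sym_r; exact: vc.
  by move/exists_inPn: (apart c cC) => /(_ v vC); rewrite cv.
have : (#|B :&: X| + #|Cy| <= #|B|)%N.
  rewrite -(cardsU_disjoint dXC) subset_leq_card //.
  by rewrite finset.subUset finset.subsetIl component_subset.
move: bigy; rewrite -/Cy; clear; lia.
Qed.

Lemma large_component_sub_giant A x z : d * n%:R <= #|A|%:R ->
  p * (e_bip G A (~: A))%:R - err <= (e_bip S A (~: A))%:R ->
  x \in A -> (#|A| < 2 * #|component S A x|)%N ->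
  (theta - d) * n%:R <= #|component S [set: 'I_n] z|%:R ->
  component S A x \subset component S [set: 'I_n] z.
Proof.
move=> dnA denseA xA bigx giant.
set C0 := component S [set: 'I_n] z in giant *; set Cx := component S A x.
apply/fintype.subsetP => y yCx; apply/negPn/negP => yC0; exfalso.
set X := component S [set: 'I_n] y.
have clX : fingraph.closed (adj_bip S A (~: A)) X.
  move=> u v /and3P[_ uv uvS].
  apply: (edge_closed_adj (edge_closed_component (S := S) (finset.in_setT y))).
  by rewrite /adj_ind !finset.in_setT uv uvS.
have CxX : Cx \subset X.
  by rewrite /Cx (eq_component yCx (mem_component S A y)) component_subW ?finset.subsetT.
have dXC0 : [disjoint X & C0].
  apply: (@disjoint_components _ _ _ y z); apply/eqP => eyz.
  by move: yC0; rewrite /C0 -eyz mem_component.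
have cover : (#|X| + #|C0| <= n)%N.
  by rewrite -(cardsU_disjoint dXC0) -[X in (_ <= X)%N]card_ord max_card.
have bign : (n < 2 * #|C0|)%N := double_lt_giant n_gt0 giant.
have AX : (#|A| <= 2 * #|A :&: X|)%N.
  apply: leq_trans (ltnW bigx) _; rewrite leq_mul2l subset_leq_card ?orbT //.
  by rewrite finset.subsetI component_subset.
have cAX := cardsID A X; rewrite finset.setIC in cAX.
have cXAc : (#|~: A :&: X| = #|X :\: A|)%N by rewrite finset.setIC finset.setDE.
have cC := cardsC A; rewrite card_ord in cC.
apply: (dense_bip_no_half_cut dnA _ _ denseA clX AX); last first.
- rewrite cXAc; move: cover bign AX cAX cC.
  by move: #|X| #|C0| #|A| #|A :&: X| #|X :\: A| #|~: A|; clear; lia.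
- by rewrite -finset.subsets_disjoint.
have : (#|A| + 2 * #|C0| <= 2 * n)%N.
  by move: cover AX cAX; move: #|X| #|C0| #|A| #|A :&: X| #|X :\: A|; clear; lia.
rewrite -(ler_nat R) natrD natrM => hA.
have cCR : #|A|%:R + #|~: A|%:R = n%:R :> R by rewrite -natrD cC.
have : 0 <= (s - 4 * d) * n%:R by rewrite mulr_ge0 // subr_ge0.
have : 0 <= d * n%:R by rewrite mulr_ge0 // ltW.
move: giant; rewrite /theta; lra.
Qed.


Variable part : 'I_n -> 'I_3.
Let V i := Vparts part [set i].
Hypothesis dense_ind : forall T,
  p * (e_ind G (Vparts part T))%:R - err <= (e_ind S (Vparts part T))%:R.
Hypothesis dense_bip : forall T1 T2,
  p * (e_bip G (Vparts part T1) (Vparts part T2))%:R - err <=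
  (e_bip S (Vparts part T1) (Vparts part T2))%:R.

Lemma V_disjoint i j : i != j -> [disjoint V i & V j].
Proof. by move=> ij; apply: Vparts_disjoint; rewrite disjoints1 inE. Qed.

Lemma e_ind_part_ge i :
  p * q * (#|V i|%:R ^+ 2 / 2) - eps * q * n%:R ^+ 2 <= (e_ind S (V i))%:R.
Proof.
by apply: le_trans (dense_ind _); apply: ind_lower; case/andP: (e_ind_G_bounds (V i)).
Qed.

Lemma e_bip_part_ge i j : i != j ->
  p * q * (#|V i|%:R * #|V j|%:R) - eps * q * n%:R ^+ 2 <= (e_bip S (V i) (V j))%:R.
Proof.
move=> ij; apply: le_trans (dense_bip _ _); apply: bip_lower.
by case/andP: (e_bip_G_bounds (V_disjoint ij)).
Qed.

Lemma giant_part_components : exists Cs : 'I_3 -> {set 'I_n}, forall i,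
  d * n%:R <= #|V i|%:R ->
  exists2 x, x \in V i & Cs i = component S (V i) x /\ (theta - d) * #|V i|%:R <= #|Cs i|%:R.
Proof.
have hC i : exists C : {set 'I_n}, d * n%:R <= #|V i|%:R ->
    exists2 x, x \in V i & C = component S (V i) x /\ (theta - d) * #|V i|%:R <= #|C|%:R.
  have [bigi|] := boolP (d * n%:R <= #|V i|%:R); last by exists finset.set0.
  have [x xV hx] := giant_comp bigi (dense_ind _).
  by exists (component S (V i) x) => _; exists x.
by have [Cs hCs] := choice hC; exists Cs.
Qed.

Theorem good_event_of_dense : good_event p q eps part S.
Proof.
have s_ge0 : 0 <= s by move: d_gt0 d_le_s; lra.
have sqrt_s : Num.sqrt (2 * p - 1) = s.
  by rewrite p_def (_ : _ - 1 = s ^+ 2) ?sqrtr_sqr ?ger0_norm //; field.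
have root_d : eps `^ 4^-1 = d.
  by rewrite eps_def -powR_mulrn ?ltW // -powRrM mulfV ?pnatr_eq0 // powRr1 // ltW.
rewrite /good_event sqrt_s root_d -/theta (funext (Vpart_Vparts part)) -/V /=.
split; first exact: e_ind_part_ge.
split=> [i j ij|]; first by apply: e_bip_part_ge; rewrite neq_ltn ij.
have [Cs hCs] := giant_part_components.
have half i x : d * n%:R <= #|V i|%:R ->
    (theta - d) * #|V i|%:R <= #|component S (V i) x|%:R ->
    (#|V i| < 2 * #|component S (V i) x|)%N.
  move=> bigi; apply: double_lt_giant.
  by rewrite -(ltr0n R) (lt_le_trans _ bigi) // mulr_gt0 ?ltr0n.
have nT : #|[set: 'I_n]| = n by rewrite cardsT card_ord.
have bigT : d * n%:R <= #|[set: 'I_n]|%:R.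
  by rewrite nT ler_piMl // ?ler0n //; move: d_le_s s_le1; lra.
have denseT := dense_ind [set: 'I_3]; rewrite Vparts_setT in denseT.
have [z _ giantz] := giant_comp bigT denseT; rewrite nT in giantz.
exists Cs; split.
  move=> i bigi; have [x xV [-> hx]] := hCs i bigi.
  by split => //; exact: large_component_unique xV (half i x bigi hx).
split.
  move=> i j ij bigi bigj; have [x xV [-> hx]] := hCs i bigi; have [y yV [-> hy]] := hCs j bigj.
  apply: large_components_bip_connected (half i x bigi hx) (half j y bigj hy) => //.
    by apply: V_disjoint; rewrite neq_ltn ij.
  exact: dense_bip.
exists (component S [set: 'I_n] z); split.
- apply: (large_component_unique (finset.in_setT z)).
  by rewrite nT; apply: double_lt_giant n_gt0 giantz.
- by apply: le_trans giantz; rewrite ler_wpM2r ?ler0n //; move: d_gt0; lra.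
- move=> i bigi; have [x xV [-> hx]] := hCs i bigi.
  apply: large_component_sub_giant bigi _ xV (half i x bigi hx) giantz.
  by rewrite -Vparts_setC; apply: dense_bip.
Qed.

End Deterministic.

Section Measure.
Variables (R : realType) (n : nat) (G : edge_set n) (mu : {ffun edge_set n -> R}).
Hypothesis mu_model : is_random_graph_model G mu.
Implicit Types (S F : edge_set n) (P Q : edge_set n -> Prop).

Lemma mu_ge0 S : 0 <= mu S. Proof. by case: mu_model. Qed.

Lemma mu_sum1 : \sum_S mu S = 1. Proof. by case: mu_model => _ []. Qed.

Lemma mu_support S : mu S != 0 -> S \subset G. Proof. by case: mu_model => _ [_]; apply. Qed.

Lemma eq_Prob P Q : (forall S, P S <-> Q S) -> Prob mu P = Prob mu Q.
Proof. by move=> PQ; apply: eq_bigl => S; apply/asboolP/asboolP => /PQ. Qed.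

Lemma ProbE P : Prob mu P = \sum_S mu S * (`[< P S >] : nat)%:R.
Proof.
rewrite /Prob big_mkcond; apply: eq_bigr => S _.
by case: (`[< P S >]); rewrite ?mulr1 ?mulr0.
Qed.

Lemma Prob_le1 P : Prob mu P <= 1.
Proof.
rewrite ProbE -[X in _ <= X]mu_sum1; apply: ler_sum => S _.
by rewrite ler_piMr ?mu_ge0 // lern1 leq_b1.
Qed.

Lemma union_bound (I : finType) (good : edge_set n -> Prop) (bad : I -> edge_set n -> Prop) :
  (forall S, mu S != 0 -> (forall i, ~ bad i S) -> good S) ->
  1 - \sum_i Prob mu (bad i) <= Prob mu good.
Proof.
move=> h.
have -> : \sum_i Prob mu (bad i) = \sum_S mu S * \sum_i (`[< bad i S >] : nat)%:R.
  under eq_bigr do rewrite ProbE.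
  by rewrite exchange_big; apply: eq_bigr => S _; rewrite mulr_sumr.
rewrite -[X in X - _ <= _]mu_sum1 ProbE lerBlDr -big_split /=; apply: ler_sum => S _.
have nbad0 : 0 <= \sum_i (`[< bad i S >] : nat)%:R :> R by apply: sumr_ge0 => i _; apply: ler0n.
have [->|muS] := eqVneq (mu S) 0; first by rewrite !mul0r addr0.
case: asboolP => [_|ngood]; first by rewrite mulr1 lerDl mulr_ge0 ?mu_ge0.
have [i bi] : exists i, bad i S.
  by apply: contrapT => nbad; apply/ngood/(h S muS) => i bi; apply: nbad; exists i.
rewrite mulr0 add0r -[X in X <= _]mulr1 ler_wpM2l ?mu_ge0 // (bigD1 i) //=.
by case: asboolP => // _; rewrite lerDl; apply: sumr_ge0 => j _; apply: ler0n.
Qed.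

End Measure.

Section SecondMoment.
Variables (R : realType) (n : nat) (G : edge_set n) (mu : {ffun edge_set n -> R}) (p : R).
Hypothesis mu_M1p : M1p p G mu.
Hypothesis G_simple : is_simple_graph G.
Hypothesis p01 : 0 <= p <= 1.
Implicit Types (S F : edge_set n) (e f : {set 'I_n}).

Let mu_model : is_random_graph_model G mu := mu_M1p.1.

Definition edge_ind e S : R := (e \in S : nat)%:R.

Lemma Prob_edge e : e \in G -> Prob mu (fun S => e \in S) = p.
Proof. by case: mu_M1p => _ [_]; apply. Qed.

Lemma mean_edge_ind e : e \in G -> \sum_S mu S * edge_ind e S = p.
Proof.
move=> eG; rewrite -(Prob_edge eG) ProbE; apply: eq_bigr => S _.
by rewrite /edge_ind; case: asboolP => [->|/negP/negbTE ->].
Qed.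

Lemma Prob_disjoint_edges e f : e \in G -> f \in G -> [disjoint e & f] ->
  Prob mu (fun S => e \in S /\ f \in S) = p * p.
Proof.
move=> eG fG def.
have in1 S g : S :&: [set g] = [set g] <-> g \in S.
  split=> [SgE|gS]; last by apply/setP => h; rewrite !inE andbC; case: eqP => // ->; rewrite gS.
  by have := finset.set11 g; rewrite -SgE finset.in_setI => /andP[].
have indep := mu_M1p.2.1 [set e] [set f].
rewrite !finset.sub1set eG fG /vspan !big_set1 in indep.
rewrite -{1}(Prob_edge eG) -(Prob_edge fG).
rewrite -(eq_Prob _ (fun S => in1 S e)) -(eq_Prob _ (fun S => in1 S f)).
rewrite -(indep isT isT def [set e] [set f]); apply: eq_Prob => S.
by rewrite !in1.
Qed.

Lemma cov_disjoint_edges e f : e \in G -> f \in G -> [disjoint e & f] ->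
  \sum_S mu S * ((edge_ind e S - p) * (edge_ind f S - p)) = 0.
Proof.
move=> eG fG def.
have both : \sum_S mu S * (edge_ind e S * edge_ind f S) = p * p.
  rewrite -(Prob_disjoint_edges eG fG def) ProbE; apply: eq_bigr => S _; congr (_ * _).
  rewrite /edge_ind; case: asboolP => [[-> ->]|]; first by rewrite mulr1.
  by case: (e \in S); case: (f \in S); rewrite ?mulr0 ?mul0r // => -[].
have expand S : mu S * ((edge_ind e S - p) * (edge_ind f S - p)) =
    mu S * (edge_ind e S * edge_ind f S) - p * (mu S * edge_ind e S) -
    p * (mu S * edge_ind f S) + p * p * mu S by ring.
rewrite (eq_bigr _ (fun S _ => expand S)) big_split /= !sumrB -!mulr_sumr both.
by rewrite (mean_edge_ind eG) (mean_edge_ind fG) (mu_sum1 mu_model); ring.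
Qed.

Lemma cov_le1 e f : \sum_S mu S * ((edge_ind e S - p) * (edge_ind f S - p)) <= 1.
Proof.
rewrite -[X in _ <= X](mu_sum1 mu_model); apply: ler_sum => S _.
rewrite ler_piMr ?(mu_ge0 mu_model) //; case/andP: p01 => p0 p1.
by rewrite /edge_ind; case: (e \in S); case: (f \in S); rewrite /=; nra.
Qed.

Lemma variance_le F : F \subset G ->
  \sum_S mu S * ((#|S :&: F|)%:R - p * #|F|%:R) ^+ 2 <=
  \sum_(e in F) \sum_(f in F) (~~ [disjoint e & f] : nat)%:R.
Proof.
move=> FG.
have centered S : (#|S :&: F|)%:R - p * #|F|%:R = \sum_(e in F) (edge_ind e S - p).
  rewrite sumrB sumr_const mulr_natr -sum1_card natr_sum big_mkcond /= [in RHS]big_mkcond /=.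
  by congr (_ - _); apply: eq_bigr => e _; rewrite !inE /edge_ind; case: (e \in S); case: (e \in F).
under eq_bigr => S _ do rewrite centered expr2 big_distrlr mulr_sumr.
rewrite exchange_big; apply: ler_sum => e eF.
under eq_bigr => S _ do rewrite mulr_sumr.
rewrite exchange_big; apply: ler_sum => f fF.
have [def|] := boolP [disjoint e & f]; last by rewrite cov_le1.
by rewrite cov_disjoint_edges ?(fintype.subsetP FG).
Qed.


(* An edge [{x, y}] of a simple graph meets only edges of the form [{x, w}] or [{y, w}]. *)
Lemma card_meeting_edges e : e \in G ->
  (\sum_(f in G) (~~ [disjoint e & f] : nat) <= 2 * n)%N.
Proof.
move=> eG; have [x [y [_ exy]]] := simple_edgeP G_simple eG.
rewrite (eq_bigr (fun f => if ~~ [disjoint e & f] then 1%N else 0%N)) //.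
rewrite -big_mkcondr sum1_card.
set Ix := [set [set x; w] | w : 'I_n]; set Iy := [set [set y; w] | w : 'I_n].
apply: (@leq_trans #|Ix :|: Iy|).
  apply/subset_leq_card/fintype.subsetP => f; rewrite !inE => /andP[fG].
  rewrite -setI_eq0 => /set0Pn[z]; rewrite finset.in_setI => /andP[ze zf].
  have [a [b [_ fab]]] := simple_edgeP G_simple fG.
  have [w fzw] : exists w, f = [set z; w].
    move: zf; rewrite fab !inE => /orP[]/eqP->; first by exists b.
    by exists a; rewrite finset.setUC.
  move: ze; rewrite exy !inE => /orP[]/eqP zxy; rewrite fzw zxy.
  - by apply/orP; left; apply/imsetP; exists w.
  - by apply/orP; right; apply/imsetP; exists w.
apply: leq_trans (leq_card_setU Ix Iy) _.
by rewrite mul2n -addnn leq_add // (leq_trans (leq_imset_card _ _)) // card_ord.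
Qed.

Lemma meeting_pairs_le F : F \subset G ->
  \sum_(e in F) \sum_(f in F) (~~ [disjoint e & f] : nat)%:R <= (2 * n * #|G|)%:R :> R.
Proof.
move=> FG; rewrite -(eq_bigr _ (fun e _ => natr_sum _ _ _ _)) -natr_sum ler_nat.
have sub_sum (X : {set {set 'I_n}}) (h : {set 'I_n} -> nat) :
    X \subset G -> (\sum_(f in X) h f <= \sum_(f in G) h f)%N.
  by move=> XG; apply: sub_le_big => //; [move=> a b; apply: leq_addr | apply/fintype.subsetP].
apply: (@leq_trans (\sum_(e in G) \sum_(f in G) (~~ [disjoint e & f] : nat))).
  by apply: leq_trans (sub_sum _ _ FG); apply: leq_sum => e _; apply: sub_sum.
rewrite mulnC -sum_nat_const; apply: leq_sum => e eG; exact: card_meeting_edges.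
Qed.

Lemma Prob_lower_tail F t : F \subset G -> 0 < t ->
  Prob mu (fun S => (#|S :&: F|)%:R < p * #|F|%:R - t) <= (2 * n * #|G|)%:R / t ^+ 2.
Proof.
move=> FG t0; set c := p * #|F|%:R.
rewrite ProbE; apply: (@le_trans _ _ (\sum_S mu S * (((#|S :&: F|)%:R - c) ^+ 2 / t ^+ 2))).
  apply: ler_sum => S _; rewrite ler_wpM2l ?(mu_ge0 mu_model) //.
  case: asboolP => [low|_]; last by rewrite divr_ge0 ?sqr_ge0.
  rewrite ler_pdivlMr ?exprn_gt0 // mul1r -[X in _ <= X]sqrrN opprB ler_sqr ?nnegrE; lra.
under eq_bigr do rewrite mulrA.
rewrite -mulr_suml ler_pM2r ?invr_gt0 ?exprn_gt0 //.
exact: le_trans (variance_le FG) (meeting_pairs_le FG).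
Qed.

End SecondMoment.

Definition dense_index := ({set 'I_3} + {set 'I_3} * {set 'I_3})%type.

Definition part_edges n (G : edge_set n) (part : 'I_n -> 'I_3) (i : dense_index) : edge_set n :=
  match i with
  | inl T => [set e in G | e \subset Vparts part T]
  | inr (T1, T2) => [set e in G | [exists x in Vparts part T1, exists y in Vparts part T2,
                                   e == [set x; y]]]
  end.

Lemma setI_sub_filter n (S G : edge_set n) (P : {pred {set 'I_n}}) : S \subset G ->
  S :&: [set e in G | P e] = [set e in S | P e].
Proof.
move=> SG; apply/setP => e; rewrite !inE.
by case eS: (e \in S); rewrite ?andbF //= (fintype.subsetP SG).
Qed.

Lemma Prob_good_event_ge (R : realType) n (G : edge_set n) (mu : {ffun edge_set n -> R})
    (p q eps s d : R) (part : 'I_n -> 'I_3) :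
  is_simple_graph G -> M1p p G mu -> 0 < q -> (0 < n)%N ->
  0 < d -> 4 * d <= s -> s <= 1 -> p = (1 + s ^+ 2) / 2 -> eps = d ^+ 4 ->
  (forall U : {set 'I_n},
     `|(e_ind G U)%:R - q * (#|U|%:R ^+ 2 / 2)| <= eps ^+ 2 / 4 * q * n%:R ^+ 2) ->
  1 - (2 * #|{: dense_index}|)%:R / eps ^+ 4 / (q * n%:R) <= Prob mu (good_event p q eps part).
Proof.
move=> sG hM q_gt0 n_gt0 d_gt0 d_le_s s_le1 p_def eps_def disc.
have eps_gt0 := eps_gt0 d_gt0 eps_def.
have p01 : 0 <= p <= 1 by rewrite (p_ge0 p_def) (p_le1 d_gt0 d_le_s s_le1 p_def).
set t := eps ^+ 2 * q * n%:R ^+ 2.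
have t_gt0 : 0 < t by rewrite /t -mulrA mulr_gt0 ?exprn_gt0 ?qn2_gt0.
pose bad i S := (#|S :&: part_edges G part i|)%:R < p * #|part_edges G part i|%:R - t.
have good_of_dense S : mu S != 0 -> (forall i, ~ bad i S) -> good_event p q eps part S.
  move=> muS dense; have SG := mu_support hM.1 muS.
  apply: (good_event_of_dense q_gt0 n_gt0 d_gt0 d_le_s s_le1 p_def eps_def sG SG disc).
    by move=> T; have /negP := dense (inl T); rewrite /bad /= setI_sub_filter // -leNgt.
  by move=> T1 T2; have /negP := dense (inr (T1, T2)); rewrite /bad /= setI_sub_filter // -leNgt.
apply: le_trans (union_bound hM.1 good_of_dense).
have G_le : (#|G|%:R : R) <= q * n%:R ^+ 2.
  have := disc [set: 'I_n]; rewrite ler_norml => /andP[_].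
  rewrite /e_ind cardsT card_ord (eq_card (_ : _ =i G)); last first.
    by move=> e; rewrite !inE finset.subsetT andbT.
  have eps_le1 : eps <= 1 by have := eps_le d_gt0 d_le_s s_le1 eps_def; lra.
  have : eps ^+ 2 <= 1 by rewrite exprn_ile1 // ltW.
  have := qn2_gt0 q_gt0 n_gt0; nra.
have bad_le i : Prob mu (bad i) <= 2 / eps ^+ 4 / (q * n%:R).
  apply: le_trans (Prob_lower_tail hM sG p01 _ t_gt0) _.
    by case: i => [T|[T1 T2]]; apply/fintype.subsetP => e; rewrite inE => /andP[].
  rewrite /t (_ : 2 / eps ^+ 4 / (q * n%:R) =
                  (2 * n%:R * (q * n%:R ^+ 2)) / (eps ^+ 2 * q * n%:R ^+ 2) ^+ 2).
    by rewrite ler_wpM2r ?invr_ge0 ?sqr_ge0 // !natrM ler_wpM2l.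
  by field; rewrite pnatr_eq0 -lt0n n_gt0 /= !lt0r_neq0.
rewrite lerD2l lerN2; apply: le_trans (ler_sum _ (fun i _ => bad_le i)) _.
rewrite sumr_const -mulr_natr natrM le_eqVlt; apply/orP; left; apply/eqP; ring.
Qed.

Local Open Scope classical_set_scope.
Local Open Scope ring_scope.

Lemma cvgy_mul_of_ln (R : realType) (q : nat -> R) :
  (fun k => q k / (ln k%:R / k%:R)) @ \oo --> +oo -> (fun k => q k * k%:R) @ \oo --> +oo.
Proof.
move=> /cvgryPge hq; apply/cvgryPge => A.
have ln2 : 0 < ln (2 : R) by apply: ln_gt0; lra.
near=> k.
have k2 : (2 <= k)%N by near: k; exact: nbhs_infty_ge.
have hk : `|A| / ln 2 <= q k / (ln k%:R / k%:R) by near: k; exact: hq.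
have k0 : 0 < k%:R :> R by rewrite ltr0n (leq_trans _ k2).
have lnk : ln 2 <= ln (k%:R : R) by rewrite ler_ln ?posrE ?ler_nat.
have -> : q k * k%:R = q k / (ln k%:R / k%:R) * ln k%:R.
  by field; rewrite !lt0r_neq0 //; lra.
apply: le_trans (ler_norm A) _.
rewrite -{1}(divfK (lt0r_neq0 ln2) `|A|).
apply: le_trans (ler_wpM2r (ltW ln2) hk) _; rewrite ler_wpM2l //.
by apply: le_trans hk; exact: divr_ge0 (normr_ge0 A) (ltW ln2).
Unshelve. all: by end_near.
Qed.

Lemma cvg_to1_of_lower_bound (R : realType) (u f : nat -> R) (c : R) :
  f @ \oo --> +oo -> (forall k, u k <= 1) ->
  (\forall k \near \oo, 1 - c / f k <= u k) -> u @ \oo --> (1 : R).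
Proof.
move=> fy u_le1 lower.
have f_gt0 : \forall k \near \oo, 0 < f k by move/cvgryPgt: fy; apply.
have inv_f0 : (fun k => (f k)^-1) @ \oo --> (0 : R) by apply/gtr0_cvgV0.
apply: (squeeze_cvgr (f := fun k => 1 - c / f k) (h := fun => 1)); last exact: cvg_cst.
  by near=> k; rewrite u_le1 andbT; near: k.
rewrite -[X in _ --> X]subr0 -(mulr0 c).
by apply: cvgB; [exact: cvg_cst | exact: cvgM (cvg_cst c) inv_f0].
Unshelve. all: by end_near.
Qed.

Theorem lemma23 (R : realType) (p : R) :
  1 / 2 < p <= 1 ->
  exists2 eps0 : R, 0 < eps0 &
  forall eps : R, 0 < eps < eps0 ->
  forall (q : nat -> R) (G : forall n : nat, edge_set n)
         (part : forall n : nat, 'I_n -> 'I_3)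
         (mu : forall n : nat, {ffun edge_set n -> R}),
    (fun n : nat => q n / (ln n%:R / n%:R)) @ \oo --> +oo ->
    (forall n, is_simple_graph (G n)) ->
    (forall n (U : {set 'I_n}),
       `| (e_ind (G n) U)%:R - q n * (#|U|%:R ^+ 2 / 2) |
         <= eps ^+ 2 / 4 * q n * n%:R ^+ 2) ->
    (forall n, M1p p (G n) (mu n)) ->
    (fun n : nat => Prob (mu n) (good_event p (q n) eps (part n))) @ \oo --> (1 : R).
Proof.
move=> /andP[p_gt p_le1]; set s := Num.sqrt (2 * p - 1).
have s_gt0 : 0 < s by rewrite sqrtr_gt0; lra.
have s_le1 : s <= 1 by rewrite -sqrtr1 ler_sqrt; lra.
have p_def : p = (1 + s ^+ 2) / 2 by rewrite sqr_sqrtr; [field | lra].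
exists ((s / 4) ^+ 4); first by rewrite exprn_gt0 // divr_gt0.
move=> eps /andP[eps_gt0 eps_lt] q G part mu hq sG disc hM.
set d := eps `^ 4^-1.
have d_gt0 : 0 < d by rewrite powR_gt0.
have eps_def : eps = d ^+ 4.
  by rewrite /d -powR_mulrn ?powR_ge0 // -powRrM mulVf ?pnatr_eq0 // powRr1 // ltW.
have d_le_s : 4 * d <= s.
  have : d < s / 4 by rewrite -(ltr_pXn2r (_ : 0 < 4)%N) ?nnegrE ?ltW ?divr_gt0 // -eps_def.
  lra.
have qny := cvgy_mul_of_ln hq.
apply: (cvg_to1_of_lower_bound qny (fun k => Prob_le1 (hM k).1 _)).
near=> k.
have qk_gt0 : 0 < q k * k%:R by near: k; move/cvgryPgt: qny; apply.
have k_gt0 : (0 < k)%N by rewrite lt0n; apply: contraTneq qk_gt0 => ->; rewrite mulr0 ltxx.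
have q_gt0 : 0 < q k by move: qk_gt0; rewrite pmulr_lgt0 // ltr0n.
exact: Prob_good_event_ge (sG k) (hM k) q_gt0 k_gt0 d_gt0 d_le_s s_le1 p_def eps_def (disc k).
Unshelve. all: by end_near.
Qed.
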